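(* Let $\mathcal H$ be a family of graphs. The following are equivalent: (i) there are constants $c_1=c_1(\mathcal H)$ and $c_2=c_2(\mathcal H)$ such that every $\mathcal H$-free graph $G$ has fewer than $c_2$ vertices $v$ with $\mathrm{sdeg}(v)\ge c_1$; (ii) there is a positive integer $n$ such that $\mathcal H\le\{nK_{1,n},\ G_n\}$.
   Context: All graphs are finite, simple, undirected. For graphs $H_1,H_2$, write $H_1\prec H_2$ if $H_2$ contains an induced subgraph isomorphic to $H_1$. A graph $G$ is $\mathcal H$-free if no $H\in\mathcal H$ satisfies $H\prec G$. For families $\mathcal H_1,\mathcal H_2$, write $\mathcal H_1\le\mathcal H_2$ if for every $H_2\in\mathcal H_2$ there is $H_1\in\mathcal H_1$ with $H_1\prec H_2$. For a vertex $v$ of $G$, the sharp degree is $\mathrm{sdeg}(v)=c(G-v)-c(G)+1$, where $c(\cdot)$ is the number of connected components. $K_{1,n}$ is the star with $n$ leaves, $nG$ the disjoint union of $n$ copies of $G$, and $G_n$ is the graph obtained from $K_n$ by attaching $n$ new pendant vertices to each vertex of $K_n$. *)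

From mathcomp Require Import all_boot.
Set Implicit Arguments. Unset Strict Implicit. Unset Printing Implicit Defensive.

Record sgraph := SGraph {
  vert : finType;
  adj : rel vert;
  adj_sym : symmetric adj;
  adj_irr : irreflexive adj }.

Definition induced_sub (H1 H2 : sgraph) : Prop :=
  exists f : vert H1 -> vert H2,
    injective f /\ forall x y, @adj H2 (f x) (f y) = @adj H1 x y.

Definition Hfree (F : sgraph -> Prop) (G : sgraph) : Prop :=
  forall H, F H -> ~ induced_sub H G.

Definition fam_le (F1 F2 : sgraph -> Prop) : Prop :=
  forall H2, F2 H2 -> exists H1, F1 H1 /\ induced_sub H1 H2.

Definition ncomp (G : sgraph) : nat :=
  #|[set [set y | connect (@adj G) x y] | x : vert G]|.

Section Del.
Variables (G : sgraph) (v : vert G).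
Definition delV : finType := {x : vert G | x != v}.
Definition del_adj : rel delV := fun x y => @adj G (val x) (val y).
Lemma del_sym : symmetric del_adj.
Proof. by move=> x y; rewrite /del_adj adj_sym. Qed.
Lemma del_irr : irreflexive del_adj.
Proof. by move=> x; rewrite /del_adj adj_irr. Qed.
Definition delv : sgraph := SGraph del_sym del_irr.
End Del.

(* sharp degree sdeg(v) = c(G - v) - c(G) + 1; this quantity is always
   >= 0, so truncated nat subtraction computes it exactly. *)
Definition sdeg (G : sgraph) (v : vert G) : nat :=
  (ncomp (delv v)).+1 - ncomp G.

(* the star K_{1,n}: vertex 0 is the centre, 1..n are leaves *)
Definition star_adj (n : nat) : rel 'I_n.+1 :=
  fun a b => (val a == 0) != (val b == 0).
Lemma star_sym (n : nat) : symmetric (@star_adj n).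
Proof. by move=> a b; rewrite /star_adj eq_sym. Qed.
Lemma star_irr (n : nat) : irreflexive (@star_adj n).
Proof. by move=> a; rewrite /star_adj eqxx. Qed.
Definition star (n : nat) : sgraph := SGraph (@star_sym n) (@star_irr n).

Section Copies.
Variables (n : nat) (G : sgraph).
Definition cp_adj : rel ('I_n * vert G)%type :=
  fun p q => (p.1 == q.1) && @adj G p.2 q.2.
Lemma cp_sym : symmetric cp_adj.
Proof. by move=> p q; rewrite /cp_adj eq_sym adj_sym. Qed.
Lemma cp_irr : irreflexive cp_adj.
Proof. by move=> p; rewrite /cp_adj adj_irr andbF. Qed.
Definition copies : sgraph := SGraph cp_sym cp_irr.
End Copies.

(* G_n : K_n on vertices (i, None), with n pendant vertices (i, Some k),
   k < n, attached to each clique vertex (i, None). *)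
Definition Gn_adj (n : nat) : rel ('I_n * option 'I_n)%type :=
  fun p q => match p.2, q.2 with
             | None, None => p.1 != q.1
             | None, Some _ | Some _, None => p.1 == q.1
             | Some _, Some _ => false
             end.
Lemma Gn_sym (n : nat) : symmetric (@Gn_adj n).
Proof. by move=> [i [a|]] [j [b|]]; rewrite /Gn_adj //= eq_sym. Qed.
Lemma Gn_irr (n : nat) : irreflexive (@Gn_adj n).
Proof. by move=> [i [a|]]; rewrite /Gn_adj //= eqxx. Qed.
Definition Gn (n : nat) : sgraph := SGraph (@Gn_sym n) (@Gn_irr n).

From mathcomp Require Import all_boot zify.
From Stdlib Require Import Classical.
Set Implicit Arguments. Unset Strict Implicit. Unset Printing Implicit Defensive.

(* The sharp degree of v is the number of components of G - v that contain a
   neighbour of v.  In G_N and in N K_{1,N} the N centres have sharp degree N,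
   so these graphs violate (i) once N > c1, c2; hence they are not H-free.
   Conversely, among 4^n vertices of sharp degree at least 2n, Ramsey's theorem
   finds n forming a clique or an independent set.  Each of them has at least n
   adjacent components of G - v containing none of the chosen vertices;
   one neighbour in each of n such components gives the pendant vertices of an
   induced G_n or n K_{1,n}. *)

Definition comp (T : finType) (r : rel T) (x : T) : {set T} := [set y | connect r x y].

Lemma eq_comp (T : finType) (r : rel T) :
  connect_sym r -> forall x y, (comp r x == comp r y) = connect r x y.
Proof.
move=> rs x y; apply/eqP/idP => [exy | cxy].
  by have := connect0 r y; rewrite -!inE -[y \in _]/(y \in comp r y) -exy inE.
by apply/setP => z; rewrite !inE (same_connect rs cxy).
Qed.

Lemma homo_connect (T T' : finType) (r : rel T) (r' : rel T') (f : T -> T') :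
  {homo f : x y / r x y >-> r' x y} -> {homo f : x y / connect r x y >-> connect r' x y}.
Proof.
move=> fh x _ /connectP[p rp ->]; apply/connectP.
by exists (map f p); [exact: homo_path rp | rewrite last_map].
Qed.

Section Components.
Variable G : sgraph.
Local Notation V := (vert G).
Local Notation e := (@adj G).

Lemma adj_connect_sym : connect_sym e.
Proof. exact/sym_connect_sym/adj_sym. Qed.

(* G - v, kept on the vertex type of G. *)
Definition avoid_adj (v : V) : rel V := fun x y => [&& x != v, y != v & e x y].

Lemma avoid_adj_connect_sym v : connect_sym (avoid_adj v).
Proof.
by apply: sym_connect_sym => x y; rewrite /avoid_adj adj_sym andbCA.
Qed.

Lemma connect_avoid_adj v : subrel (connect (avoid_adj v)) (connect e).
Proof. by apply: connect_sub => x y /and3P[_ _ /connect1]. Qed.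

Lemma connect_avoid_adj_neq v x y : connect (avoid_adj v) x y -> x != v -> y != v.
Proof.
have clv : closed (avoid_adj v) [pred x | x != v] by move=> a b /and3P[av bv _]; rewrite !inE av bv.
by move=> /(closed_connect clv); rewrite !inE => ->.
Qed.

Lemma connect_delv v (x y : delV v) :
  connect (@adj (delv v)) x y = connect (avoid_adj v) (val x) (val y).
Proof.
apply/idP/idP => [|cxy].
  by apply: homo_connect => a b ab; rewrite /avoid_adj (valP a) (valP b).
rewrite -(valKd x x) -(valKd x y).
apply: homo_connect cxy => a b /and3P[av bv ab].
by rewrite /= /del_adj !insubdK.
Qed.

Lemma ncomp_delv v : ncomp (delv v) = #|comp (avoid_adj v) @: [set~ v]|.
Proof.
have compE (x : delV v) : val @: comp (@adj (delv v)) x = comp (avoid_adj v) (val x).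
  apply/setP => y; rewrite inE; apply/imsetP/idP => [[z] | cxy].
    by rewrite inE connect_delv => cxz ->.
  have yv := connect_avoid_adj_neq cxy (valP x).
  by exists (Sub y yv); rewrite // inE connect_delv SubK.
have valT : val @: [set: delV v] = [set~ v].
  apply/setP => y; rewrite !inE; apply/imsetP/idP => [[[z zv] _ ->] // | yv].
  by exists (Sub y yv); rewrite ?SubK.
have vi : injective (fun A : {set delV v} => val @: A) by apply: imset_inj; exact: val_inj.
rewrite /ncomp -(card_imset _ vi) -imset_comp -valT -imset_comp.
apply: eq_card => S; apply/imsetP/imsetP => -[x _ ->]; exists x; rewrite ?inE //.
  exact: compE.
exact/esym/compE.
Qed.

Lemma connect_avoid_adj_nbr v x : x != v -> connect e x v ->
  exists2 y, e v y & connect (avoid_adj v) x y.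
Proof.
move=> + /connectP[p]; elim: p x => [|z p IHp] x xv /=; first by move=> _ xv'; rewrite xv' eqxx in xv.
case/andP=> xz zp lastv; have [zv | zv] := eqVneq z v.
  by exists x; rewrite ?connect0 // adj_sym -zv.
have [y vy zy] := IHp z zv zp lastv; exists y => //.
by apply: connect_trans zy; apply: connect1; rewrite /avoid_adj xv zv.
Qed.

Lemma connect_far v x : ~~ connect e v x -> connect e x =1 connect (avoid_adj v) x.
Proof.
move=> vx y; apply/idP/idP => [/connectP[p xp ->] | /connect_avoid_adj //].
have farP : {in [pred z | ~~ connect e v z] &, subrel e (avoid_adj v)}.
  move=> a b; rewrite !inE => va vb ab; rewrite /avoid_adj ab andbT.
  by apply/andP; split; [apply: contraNneq va | apply: contraNneq vb] => ->; exact: connect0.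
apply/connectP; exists p => //; apply: (sub_in_path farP) (xp).
apply/allP => z /(path_connect xp) xz; rewrite inE; apply: contra vx => vz.
by apply: connect_trans vz _; rewrite adj_connect_sym.
Qed.

Definition nbr_comps v := comp (avoid_adj v) @: [set y | e v y].

Lemma sdegE v : sdeg v = #|nbr_comps v|.
Proof.
(* The components of G - v that miss N(v) are the components of G other than
   that of v. *)
set far := [set x | ~~ connect e v x].
have farv x : x \in far -> x != v by rewrite inE; apply: contraNneq => ->; exact: connect0.
have compE : {in far, comp e =1 comp (avoid_adj v)}.
  by move=> x; rewrite inE => /connect_far vx; apply/setP => y; rewrite !inE vx.
have split : comp (avoid_adj v) @: [set~ v] = nbr_comps v :|: comp (avoid_adj v) @: far.
  apply/setP => S; rewrite inE; apply/imsetP/orP => [[x] | [] /imsetP[x]].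
  - rewrite in_setC1 => xv ->; case: (boolP (connect e v x)) => [vx | xf].
      rewrite adj_connect_sym in vx; have [y vy xy] := connect_avoid_adj_nbr xv vx.
      left; apply/imsetP; exists y; first by rewrite inE.
      by apply/eqP; rewrite (eq_comp (avoid_adj_connect_sym v)).
    by right; apply: imset_f; rewrite inE.
  - rewrite inE => vx ->; exists x => //; rewrite in_setC1; apply: contraTneq vx => ->.
    by rewrite adj_irr.
  - by move=> xf ->; exists x => //; rewrite in_setC1 farv.
have disj : nbr_comps v :&: comp (avoid_adj v) @: far = set0.
  apply/setP => S; rewrite inE in_set0; apply/andP => -[/imsetP[y vy ->] /imsetP[x xf /eqP]].
  rewrite (eq_comp (avoid_adj_connect_sym v)) => /connect_avoid_adj yx.
  move: xf; rewrite inE => /negP; apply; rewrite inE in vy.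
  exact: connect_trans (connect1 vy) yx.
have farE : comp e @: far = [set comp e x | x : V] :\ comp e v.
  apply/setP => S; rewrite !inE; apply/imsetP/andP => [[x xf ->] | [Sv /imsetP[x _ Sx]]].
    split; last exact: imset_f.
    by rewrite (eq_comp adj_connect_sym) adj_connect_sym; rewrite inE in xf.
  by exists x => //; rewrite inE -adj_connect_sym -(eq_comp adj_connect_sym) -Sx.
have cardG := cardsD1 (comp e v) [set comp e x | x : V].
rewrite imset_f // in cardG.
rewrite /sdeg ncomp_delv split cardsU disj cards0 -(eq_in_imset compE) farE.
rewrite [ncomp G]cardG; lia.
Qed.

Lemma leq_card_sdeg v (X : {set V}) : X \subset [set y | e v y] ->
  {in X &, forall x y, connect (avoid_adj v) x y -> x = y} -> #|X| <= sdeg v.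
Proof.
move=> Xv sepX; rewrite sdegE -(card_in_imset (f := comp (avoid_adj v))).
  exact/subset_leq_card/imsetS.
by move=> x y xX yX /eqP; rewrite (eq_comp (avoid_adj_connect_sym v)); exact: sepX.
Qed.
End Components.

Section Ramsey.
Variable G : sgraph.
Local Notation V := (vert G).
Local Notation e := (@adj G).

Definition homogeneous (b : bool) (s : seq V) := {in s &, forall x y, x != y -> e x y = b}.

Lemma homogeneous_cons b x (S : {set V}) s : x \in S -> uniq s ->
  {subset s <= [set y in S | (y != x) && (e x y == b)]} -> homogeneous b s ->
  [/\ uniq (x :: s), {subset x :: s <= S} & homogeneous b (x :: s)].
Proof.
move=> xS us sN hs; have xy y : y \in s -> (y != x) && (e x y == b).
  by move=> /sN; rewrite inE => /andP[].
split.
- by rewrite /= us andbT; apply/negP => /xy; rewrite eqxx.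
- by move=> y; rewrite inE => /predU1P[-> // | /sN]; rewrite inE => /andP[].
move=> y z; rewrite !inE => /predU1P[-> | ys] /predU1P[-> | zs]; rewrite ?eqxx // => yz.
- by have /andP[_ /eqP] := xy z zs.
- by have /andP[_ /eqP] := xy y ys; rewrite adj_sym.
- exact: hs yz.
Qed.

Lemma ramsey a b (S : {set V}) : 2 ^ (a + b) <= #|S| ->
  exists c s, [/\ uniq s, size s = (if c then a else b), {subset s <= S} & homogeneous c s].
Proof.
elim: a b S => [|a IHa] b S hS; first by exists true, [::].
elim: b S hS => [|b IHb] S hS; first by exists false, [::].
have [x xS] : exists x, x \in S.
  by apply/card_gt0P; apply: leq_trans hS; rewrite expn_gt0.
pose N c := [set y in S | (y != x) && (e x y == c)].
have cardS : #|S| <= (#|N true| + #|N false|).+1.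
  have sub : S \subset x |: (N true :|: N false).
    by apply/subsetP => y yS; rewrite !inE yS; case: eqP => //= _; case: (e x y).
  apply: leq_trans (subset_leq_card sub) _; rewrite cardsU1 -add1n.
  exact: leq_add (leq_b1 _) (leq_card_setU _ _).
have [hN | hN] := leqP (2 ^ (a + b.+1)) #|N true|.
- have [[] [s [us ss sN hs]]] := IHa b.+1 (N true) hN.
    have [] := homogeneous_cons xS us sN hs.
    by exists true, (x :: s); split; rewrite //= ss.
  by exists false, s; split => // y /sN; rewrite inE => /andP[].
- have hM : 2 ^ (a.+1 + b) <= #|N false|.
    rewrite addSn -addnS; move: hS; rewrite addSn expnS; lia.
  have [[] [s [us ss sM hs]]] := IHb (N false) hM.
    by exists true, s; split => // y /sM; rewrite inE => /andP[].
  have [] := homogeneous_cons xS us sM hs.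
  by exists false, (x :: s); split; rewrite //= ss.
Qed.
End Ramsey.

(* b = true gives G_n; b = false gives n K_{1,n} with the leaves of each star
   indexed by unlift ord0. *)
Definition spider_adj (n : nat) (b : bool) : rel ('I_n * option 'I_n) :=
  fun p q => match p.2, q.2 with
             | None, None => b && (p.1 != q.1)
             | Some _, Some _ => false
             | _, _ => p.1 == q.1
             end.

Section Spider.
Variables (G : sgraph) (n : nat) (b : bool).
Variables (c : 'I_n -> vert G) (l : 'I_n -> 'I_n -> vert G).
Local Notation e := (@adj G).
Hypotheses (c_inj : injective c) (adj_c : forall i i', e (c i) (c i') = b && (i != i'))
  (adj_c_l : forall i j, e (c i) (l i j))
  (l_sep : forall i j j', connect (avoid_adj (c i)) (l i j) (l i j') -> j = j')
  (l_far : forall i i' j, i' != i -> ~~ connect (avoid_adj (c i)) (l i j) (c i')).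

Lemma l_neq_c i i' j : l i j != c i'.
Proof.
have [-> | i'i] := eqVneq i' i; first by apply: contraTneq (adj_c_l i j) => ->; rewrite adj_irr.
by apply: contraNneq (l_far j i'i) => ->; exact: connect0.
Qed.

Lemma adj_c_lE i i' j : e (c i') (l i j) = (i == i').
Proof.
have [-> | ii'] := eqVneq i i'; first exact: adj_c_l.
apply/negP => ci'l; have i'i : i' != i by rewrite eq_sym.
have lc : avoid_adj (c i) (l i j) (c i') by rewrite /avoid_adj l_neq_c (inj_eq c_inj) i'i adj_sym.
by move: (l_far j i'i); rewrite connect1.
Qed.

Lemma adj_l_l i j i' j' : e (l i j) (l i' j') = false.
Proof.
apply/negP => ll; have [ii' | ii'] := eqVneq i' i.
  subst i'; have /l_sep jj' : connect (avoid_adj (c i)) (l i j) (l i j').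
    by apply: connect1; rewrite /avoid_adj !l_neq_c.
  by rewrite jj' adj_irr in ll.
have l'c : avoid_adj (c i) (l i' j') (c i').
  by rewrite /avoid_adj l_neq_c (inj_eq c_inj) ii' adj_sym adj_c_l.
have ll' : avoid_adj (c i) (l i j) (l i' j') by rewrite /avoid_adj !l_neq_c.
by move: (l_far j ii'); rewrite (connect_trans (connect1 ll') (connect1 l'c)).
Qed.

Lemma l_inj i j i' j' : l i j = l i' j' -> i = i' /\ j = j'.
Proof.
move=> lij; have ii' : i = i' by apply/eqP; rewrite -(adj_c_lE i i' j) lij adj_c_lE.
by subst i'; split => //; apply: (@l_sep i); rewrite lij connect0.
Qed.

Definition spider (p : 'I_n * option 'I_n) : vert G :=
  if p.2 is Some j then l p.1 j else c p.1.

Lemma spider_inj : injective spider.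
Proof.
move=> [i [j|]] [i' [j'|]]; rewrite /spider /=.
- by case/l_inj => -> ->.
- by move=> lc; move: (l_neq_c i i' j); rewrite lc eqxx.
- by move=> cl; move: (l_neq_c i' i j'); rewrite cl eqxx.
- by move/c_inj ->.
Qed.

Lemma adj_spider p q : e (spider p) (spider q) = spider_adj b p q.
Proof.
case: p q => [i [j|]] [i' [j'|]]; rewrite /spider /spider_adj /=.
- exact: adj_l_l.
- by rewrite adj_sym adj_c_lE.
- by rewrite adj_c_lE eq_sym.
- exact: adj_c.
Qed.
End Spider.

Lemma unlift0K n : cancel (@unlift n.+1 ord0) (fun o => if o is Some j then lift ord0 j else ord0).
Proof. by move=> a; case: unliftP. Qed.

Lemma induced_spider (G : sgraph) n b (f : 'I_n * option 'I_n -> vert G) :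
  injective f -> (forall p q, adj (f p) (f q) = spider_adj b p q) ->
  induced_sub (if b then Gn n else copies n (star n)) G.
Proof.
move=> f_inj adj_f; case: b adj_f => adj_f.
  by exists f; split => // p q; rewrite adj_f; case: p q => [i [j|]] [i' [j'|]].
pose g (p : 'I_n * 'I_n.+1) := (p.1, unlift ord0 p.2).
have g_inj : injective g.
  by move=> [i a] [i' a'] [-> /(can_inj (@unlift0K n))] ->.
exists (f \o g); split; first exact: inj_comp f_inj g_inj.
move=> [i a] [i' a']; rewrite /= adj_f /spider_adj /cp_adj /star_adj /=.
by case: unliftP => [j ->|->]; case: unliftP => [j' ->|->]; rewrite ?andbF ?andbT // eq_sym.
Qed.

Section Build.
Variables (G : sgraph) (n : nat) (b : bool) (s : seq (vert G)) (x0 : vert G).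
Local Notation V := (vert G).
Local Notation e := (@adj G).
Hypotheses (s_uniq : uniq s) (size_s : size s = n) (s_hom : homogeneous b s)
  (sdeg_s : forall v, v \in s -> n + n <= sdeg v).

Definition free_comps (v : V) := [set K in nbr_comps v | [disjoint K & s]].

Lemma card_free_comps v : v \in s -> n <= #|free_comps v|.
Proof.
move=> vs; have busy : nbr_comps v :\: free_comps v \subset comp (avoid_adj v) @: [set y in s].
  apply/subsetP => K; rewrite !inE => /andP[/negP notfree Kv]; move: notfree.
  rewrite Kv andTb => /negP; case/pred0Pn => y /andP[yK ys].
  case/imsetP: Kv yK => x _ ->; rewrite inE => xy; apply/imsetP; exists y; rewrite ?inE //.
  by apply/eqP; rewrite (eq_comp (avoid_adj_connect_sym v)); rewrite inE in xy.
have := leq_trans (subset_leq_card busy) (leq_imset_card _ _).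
have := cardsID (free_comps v) (nbr_comps v).
have -> : nbr_comps v :&: free_comps v = free_comps v.
  by apply/setIidPr/subsetP => K; rewrite inE => /andP[].
have card_s : #|[set y in s]| = n by rewrite cardsE -size_s; apply/card_uniqP.
rewrite -sdegE card_s; have := sdeg_s vs; lia.
Qed.

Definition nbr_in (v : V) (K : {set V}) := odflt v [pick y in K | e v y].

Lemma nbr_inP v K : K \in nbr_comps v ->
  e v (nbr_in v K) /\ comp (avoid_adj v) (nbr_in v K) = K.
Proof.
case/imsetP => x; rewrite inE => vx ->; rewrite /nbr_in.
case: pickP => [y /andP[xy vy] | /(_ x)]; last by rewrite inE connect0 vx.
split => //; apply/eqP; rewrite (eq_comp (avoid_adj_connect_sym v)) avoid_adj_connect_sym.
by rewrite inE in xy.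
Qed.

Let centre (i : 'I_n) := nth x0 s i.
Let branch_comp (i j : 'I_n) := nth set0 (enum (free_comps (centre i))) j.
Let branch (i j : 'I_n) := nbr_in (centre i) (branch_comp i j).

Lemma centre_in i : centre i \in s.
Proof. by rewrite mem_nth // size_s. Qed.

Lemma centre_inj : injective centre.
Proof. by move=> i i' /eqP; rewrite nth_uniq ?size_s // => /eqP /val_inj. Qed.

Lemma adj_centre i i' : e (centre i) (centre i') = b && (i != i').
Proof.
have [-> | ii'] := eqVneq i i'; first by rewrite adj_irr andbF.
by rewrite andbT s_hom ?centre_in ?(inj_eq centre_inj).
Qed.

Lemma size_free_comps i : n <= size (enum (free_comps (centre i))).
Proof. by rewrite -cardE card_free_comps ?centre_in. Qed.

Lemma branch_compP i j : branch_comp i j \in free_comps (centre i).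
Proof. by rewrite -mem_enum mem_nth // (leq_trans _ (size_free_comps i)). Qed.

Lemma branchP i j : e (centre i) (branch i j) /\
  comp (avoid_adj (centre i)) (branch i j) = branch_comp i j.
Proof. by apply: nbr_inP; have := branch_compP i j; rewrite inE => /andP[]. Qed.

Lemma branch_sep i j j' :
  connect (avoid_adj (centre i)) (branch i j) (branch i j') -> j = j'.
Proof.
rewrite -(eq_comp (avoid_adj_connect_sym _)) (branchP i j).2 (branchP i j').2.
rewrite nth_uniq ?enum_uniq ?(leq_trans _ (size_free_comps i)) //.
by move/eqP/val_inj.
Qed.

Lemma branch_far i i' j : ~~ connect (avoid_adj (centre i)) (branch i j) (centre i').
Proof.
apply/negP => bc; have := branch_compP i j; rewrite inE => /andP[_ /pred0P/(_ (centre i'))].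
by rewrite /= -(branchP i j).2 inE bc centre_in.
Qed.

Lemma induced_homogeneous : induced_sub (if b then Gn n else copies n (star n)) G.
Proof.
have adj_c_l i j := (branchP i j).1.
have far i i' j (_ : i' != i) := branch_far i i' j.
exact: induced_spider (spider_inj centre_inj adj_c_l branch_sep far)
  (adj_spider centre_inj adj_centre adj_c_l branch_sep far).
Qed.
End Build.

Lemma induced_sub_trans A B C : induced_sub A B -> induced_sub B C -> induced_sub A C.
Proof.
move=> [f [f_inj adj_f]] [g [g_inj adj_g]]; exists (g \o f); split; first exact: inj_comp.
by move=> x y /=; rewrite adj_g adj_f.
Qed.

Lemma induced_of_many_sharp (G : sgraph) n :
  2 ^ (n + n) <= #|[set v : vert G | n + n <= sdeg v]| ->
  exists b, induced_sub (if b then Gn n else copies n (star n)) G.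
Proof.
move=> many; have [b [s [s_uniq size_s sS s_hom]]] := ramsey many.
have [x0 _] : exists x0, x0 \in [set v : vert G | n + n <= sdeg v].
  by apply/card_gt0P; apply: leq_trans many; rewrite expn_gt0.
exists b; rewrite if_same in size_s; apply: (induced_homogeneous x0 s_uniq size_s s_hom).
by move=> v /sS; rewrite inE.
Qed.

Lemma sink_connect (T : finType) (r : rel T) x y :
  (forall z, ~~ r x z) -> connect r x y -> x = y.
Proof. by move=> x_sink /connectP[[| z p] /= ]; [move=> _ -> | rewrite (negbTE (x_sink z))]. Qed.

Lemma sdeg_star_centre N (i : 'I_N) : N <= @sdeg (copies N (star N)) (i, ord0).
Proof.
set X := [set ((i, lift ord0 j) : vert (copies N (star N))) | j : 'I_N].
have card_X : #|X| = N by rewrite card_imset ?card_ord // => j j' /(congr1 snd) /lift_inj.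
rewrite -[N in N <= _]card_X; apply: leq_card_sdeg.
  by apply/subsetP => _ /imsetP[j _ ->]; rewrite inE /= /cp_adj /star_adj /= eqxx.
move=> _ y /imsetP[j _ ->] _; apply: sink_connect => -[i' a].
rewrite /avoid_adj /= /cp_adj /star_adj /=; apply/and3P => -[_ /eqP ne /andP[/eqP ii' a0]].
by apply: ne; rewrite -ii'; congr pair; apply/val_inj; case: a a0 => [[|a] ?].
Qed.

Lemma sdeg_Gn_centre N (i : 'I_N) : N <= @sdeg (Gn N) (i, None).
Proof.
set X := [set ((i, Some j) : vert (Gn N)) | j : 'I_N].
have card_X : #|X| = N by rewrite card_imset ?card_ord // => j j' [].
rewrite -[N in N <= _]card_X; apply: leq_card_sdeg.
  by apply/subsetP => _ /imsetP[j _ ->]; rewrite inE /= /Gn_adj /= eqxx.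
move=> _ y /imsetP[j _ ->] _; apply: sink_connect => -[i' [a|]];
  rewrite /avoid_adj /= /Gn_adj /= ?andbF //.
by apply/and3P => -[_ /eqP ne /eqP ii']; apply: ne; rewrite ii'.
Qed.

Lemma leq_card_sharp (G : sgraph) N c (f : 'I_N -> vert G) :
  injective f -> (forall i, N <= sdeg (f i)) -> c <= N ->
  N <= #|[set v : vert G | c <= sdeg v]|.
Proof.
move=> f_inj sdeg_f cN; rewrite -[N in N <= _]card_ord -(card_imset _ f_inj).
by apply/subset_leq_card/subsetP => _ /imsetP[i _ ->]; rewrite inE (leq_trans cN).
Qed.

Lemma many_sharp_family N c (X : sgraph) : c <= N ->
  X = copies N (star N) \/ X = Gn N -> N <= #|[set v : vert X | c <= sdeg v]|.
Proof.
move=> cN [-> | ->].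
- apply: (@leq_card_sharp (copies N (star N)) N c (fun i => (i, ord0))) cN => [i i' [] // | i].
  exact: sdeg_star_centre.
- apply: (@leq_card_sharp (Gn N) N c (fun i => (i, None))) cN => [i i' [] // | i].
  exact: sdeg_Gn_centre.
Qed.

Theorem theorem1p14 (H : sgraph -> Prop) :
  (exists c1 c2 : nat, forall G : sgraph, Hfree H G ->
      #|[set v : vert G | c1 <= sdeg v]| < c2)
  <->
  (exists n : nat, 0 < n /\
     fam_le H (fun X => X = copies n (star n) \/ X = Gn n)).
Proof.
split => [[c1 [c2 few]] | [n [_ H_le]]].
- exists (c1 + c2).+1; split => // X famX; apply: NNPP => noH.
  have X_free : Hfree H X by move=> H1 HH1 H1X; apply: noH; exists H1.
  have := few X X_free; rewrite ltnNge => /negP; apply.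
  by apply: leq_trans (many_sharp_family _ famX); lia.
- exists (n + n), (2 ^ (n + n)) => G G_free; rewrite ltnNge; apply/negP => many.
  have [b Gb] := induced_of_many_sharp many.
  have [H1 [HH1 H1b]] : exists H1, H H1 /\ induced_sub H1 (if b then Gn n else copies n (star n)).
    by apply: H_le; case: b {Gb}; [right | left].
  exact: G_free HH1 (induced_sub_trans H1b Gb).
Qed.
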